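(* Let $P$ be a finite poset of dimension $2$ such that no strong copy of $P$ in a two-dimensional grid $[k]\times[l]$ contains two neighboring points. Then for all $k,l\ge1$, $sat^*([k]\times[l],P)\ge\max\{k,l\}$.
   Context: $[k]\times[l]$ is ordered coordinatewise. Two points of $[k]\times[l]$ are neighboring if they agree in one coordinate and differ by exactly $1$ in the other. The dimension of a poset $P$ is the least $d$ such that there are $d$ linear orders $\pi_1,\dots,\pi_d$ of $P$ with $p<_Pq$ iff $\pi_i(p)<\pi_i(q)$ for all $i$. A strong copy of $P$ in a poset $R$ is the image of an injection $i:P\to R$ with $p\le_P p'\iff i(p)\le_R i(p')$. A subset $F\subseteq Q$ is strong $P$-saturated if $F$ contains no strong copy of $P$ but for every $x\in Q\setminus F$, $F\cup\{x\}$ contains a strong copy of $P$; $sat^*(Q,P)$ is the minimum size of a strong $P$-saturated subset of $Q$. *)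

From mathcomp Require Import all_boot all_order.
Set Implicit Arguments. Unset Strict Implicit. Unset Printing Implicit Defensive.

(* Dimension: [realizer P d] says there are d linear orders pi_1..pi_d of P
   (each given as an injective ranking P -> nat) such that
   p <_P q iff pi_i(p) < pi_i(q) for all i. *)
Definition realizer (disp : Order.disp_t) (P : finPOrderType disp) (d : nat) : Prop :=
  exists pi : 'I_d -> P -> nat,
    (forall i, injective (pi i)) /\
    (forall p q : P, (p < q)%O <-> (forall i, pi i p < pi i q)).

Definition poset_dim_eq (disp : Order.disp_t) (P : finPOrderType disp) (d : nat) : Prop :=
  realizer P d /\ (forall m, m < d -> ~ realizer P m).

(* The grid [k] x [l], with [k] represented by 'I_k = {0,..,k-1}. *)
Definition grid (k l : nat) := ('I_k * 'I_l)%type.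

Definition grid_le (k l : nat) (a b : grid k l) : bool :=
  (a.1 <= b.1) && (a.2 <= b.2).

Definition neighbors (k l : nat) (a b : grid k l) : bool :=
  ((nat_of_ord a.1 == b.1) && ((a.2.+1 == b.2) || (b.2.+1 == a.2)))
  || ((nat_of_ord a.2 == b.2) && ((a.1.+1 == b.1) || (b.1.+1 == a.1))).

Definition strong_embedding (disp : Order.disp_t) (P : finPOrderType disp) (k l : nat)
  (f : P -> grid k l) : bool :=
  injectiveb f && [forall p, forall q, (p <= q)%O == grid_le (f p) (f q)].

Definition contains_strong_copy (disp : Order.disp_t) (P : finPOrderType disp) (k l : nat)
  (F : {set grid k l}) : bool :=
  [exists f : {ffun P -> grid k l}, strong_embedding f && [forall p, f p \in F]].

Definition strong_saturated (disp : Order.disp_t) (P : finPOrderType disp) (k l : nat)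
  (F : {set grid k l}) : bool :=
  ~~ contains_strong_copy P F &&
  [forall x, (x \notin F) ==> contains_strong_copy P (x |: F)].

(* sat^*([k]x[l], P): minimum size of a strong P-saturated subset
   (a saturated set always exists, so the default k*l = |Q| is never the
   only candidate; it is also an upper bound for any subset). *)
Definition sat_star (disp : Order.disp_t) (P : finPOrderType disp) (k l : nat) : nat :=
  \big[minn/(k * l)]_(F : {set grid k l} | strong_saturated P F) #|F|.

From mathcomp Require Import all_boot all_order zify.
Set Implicit Arguments. Unset Strict Implicit. Unset Printing Implicit Defensive.

(* A strong P-saturated set F of [k] x [l] meets every column.  Otherwise some
   empty column j is adjacent to an occupied column j'; let z be the point of
   F in column j' that is extreme in the direction away from the empty column
   (lowest if j' = j + 1, highest if j' = j - 1), and x its neighbour in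
   column j.  Then x compares with every other point of F exactly as z does,
   and no copy of P uses both x and z since they are neighbours, so any copy
   of P in F + x yields one in F by moving x to z: F is not saturated.
   Hence #|F| >= k, and #|F| >= l by transposing the grid.  The dimension
   hypothesis only serves to ensure that P has two elements, so that the
   empty set is not saturated. *)

Section Dimension.

Variables (disp : Order.disp_t) (P : finPOrderType disp).

Lemma card_le1_realizer : #|P| <= 1 -> realizer P 1.
Proof.
move=> /card_le1_eqP P_eq; exists (fun _ _ => 0); split=> [_ p q _ | p q]; first exact: P_eq.
by rewrite (P_eq p q) // Order.POrderTheory.ltxx; split=> // /(_ ord0).
Qed.

Lemma card_gt1_of_dim d : poset_dim_eq P d -> 1 < d -> 1 < #|P|.
Proof.
move=> [_ dim_min] d_gt1; rewrite ltnNge; apply/negP => /card_le1_realizer.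
exact: dim_min.
Qed.

End Dimension.

Section Columns.

Variables k l : nat.
Implicit Type F : {set grid k l}.

Definition twin F (x z : grid k l) : Prop :=
  forall w, w \in F -> w != z ->
    grid_le x w = grid_le z w /\ grid_le w x = grid_le w z.

Definition occupied F (c : nat) : bool := [exists w in F, nat_of_ord w.1 == c].

Lemma row_neq_of_col_eq (u v : grid k l) :
  u != v -> nat_of_ord u.1 = v.1 -> nat_of_ord u.2 != v.2.
Proof.
move=> uv u1; apply: contraNneq uv => u2.
by apply/eqP/injective_projections; apply: val_inj.
Qed.

Lemma twin_left_of_column F j (j_lt : j < k) z :
  z \in F -> nat_of_ord z.1 = j.+1 ->
  (forall w, w \in F -> nat_of_ord w.1 = j.+1 -> z.2 <= w.2) ->
  ~~ occupied F j -> twin F (Ordinal j_lt, z.2) z.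
Proof.
move=> zF z1 z_low free_j w wF wz; rewrite /grid_le /= z1.
have w1 : nat_of_ord w.1 != j.
  by apply: contraNneq free_j => w1; apply/exists_inP; exists w; rewrite ?w1.
have w2 : nat_of_ord w.1 = j.+1 -> z.2 < w.2.
  move=> w1'; rewrite ltn_neqAle z_low // andbT eq_sym.
  by apply: row_neq_of_col_eq; rewrite ?w1' ?z1.
move: w1 w2; move: (nat_of_ord w.1) (nat_of_ord w.2) (nat_of_ord z.2) => a b c.
lia.
Qed.

Lemma twin_right_of_column F j (j_lt : j.+1 < k) z :
  z \in F -> nat_of_ord z.1 = j ->
  (forall w, w \in F -> nat_of_ord w.1 = j -> w.2 <= z.2) ->
  ~~ occupied F j.+1 -> twin F (Ordinal j_lt, z.2) z.
Proof.
move=> zF z1 z_high free_j w wF wz; rewrite /grid_le /= z1.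
have w1 : nat_of_ord w.1 != j.+1.
  by apply: contraNneq free_j => w1; apply/exists_inP; exists w; rewrite ?w1.
have w2 : nat_of_ord w.1 = j -> w.2 < z.2.
  move=> w1'; rewrite ltn_neqAle z_high // andbT.
  by apply: row_neq_of_col_eq; rewrite ?w1' ?z1.
move: w1 w2; move: (nat_of_ord w.1) (nat_of_ord w.2) (nat_of_ord z.2) => a b c.
lia.
Qed.

Lemma card_ge_of_occupied F : (forall i : 'I_k, occupied F i) -> k <= #|F|.
Proof.
move=> occ; apply: leq_trans (leq_imset_card (fun y : grid k l => y.1) F).
rewrite -{1}(card_ord k) -cardsT; apply/subset_leq_card/subsetP => i _.
by have /exists_inP[y yF /eqP yi] := occ i; apply/imsetP; exists y => //; apply/val_inj.
Qed.

End Columns.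

Definition swap_grid {k l} (y : grid k l) : grid l k := (y.2, y.1).

Lemma swap_gridK k l : cancel (@swap_grid k l) (@swap_grid l k).
Proof. by case. Qed.

Lemma grid_le_swap k l (u v : grid k l) :
  grid_le (swap_grid u) (swap_grid v) = grid_le u v.
Proof. exact: andbC. Qed.

Section StrongCopies.

Variables (disp : Order.disp_t) (P : finPOrderType disp).

Lemma card_le_of_copy k l (F : {set grid k l}) :
  contains_strong_copy P F -> #|P| <= #|F|.
Proof.
move=> /existsP[f /andP[/andP[/injectiveP f_inj _] /forallP f_in]].
rewrite -(card_codom f_inj); apply: subset_leq_card.
by apply/subsetP => _ /codomP[p ->].
Qed.

Lemma contains_copy_relabel k l k' l' (f : P -> grid k l)
    (r : grid k l -> grid k' l') (F : {set grid k' l'}) :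
  strong_embedding f ->
  {in codom f &, injective r} ->
  {in codom f &, forall u v, grid_le (r u) (r v) = grid_le u v} ->
  (forall p, r (f p) \in F) ->
  contains_strong_copy P F.
Proof.
move=> /andP[/injectiveP f_inj /forallP f_ord] r_inj r_ord rf_in.
apply/existsP; exists [ffun p => r (f p)].
apply/andP; split; last by apply/forallP => p; rewrite ffunE.
apply/andP; split.
  apply/injectiveP => p q; rewrite !ffunE.
  by move=> /(r_inj _ _ (codom_f f p) (codom_f f q)) /f_inj.
apply/forallP => p; apply/forallP => q.
by rewrite !ffunE r_ord ?codom_f //; apply/forallP: q; apply: f_ord.
Qed.

Lemma contains_copy_swap k l (F : {set grid k l}) :
  contains_strong_copy P (swap_grid @: F) = contains_strong_copy P F.
Proof.
have copy_swap k' l' (G : {set grid k' l'}) (H : {set grid l' k'}) :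
    (forall y, y \in G -> swap_grid y \in H) ->
    contains_strong_copy P G -> contains_strong_copy P H.
  move=> GH /existsP[f /andP[f_emb /forallP f_in]].
  apply: (contains_copy_relabel f_emb (r := @swap_grid _ _)) => [u v _ _ | u v _ _ | p].
  - exact: (can_inj (@swap_gridK _ _)).
  - exact: grid_le_swap.
  - exact: GH.
apply/idP/idP; apply: copy_swap => y; last exact: imset_f.
by case/imsetP => y' y'F ->; rewrite swap_gridK.
Qed.

Lemma saturated_swap k l (F : {set grid k l}) :
  strong_saturated P F -> strong_saturated P (swap_grid @: F).
Proof.
move=> /andP[noF /forallP satF]; apply/andP; split; first by rewrite contains_copy_swap.
apply/forallP => x; apply/implyP => xF.
rewrite -[x]swap_gridK -imsetU1 contains_copy_swap; apply: (implyP (satF _)).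
by apply: contra xF => /(imset_f (@swap_grid _ _)); rewrite swap_gridK.
Qed.

Section Saturated.

Variables k l : nat.

Hypothesis copies_avoid_neighbors : forall f : P -> grid k l, strong_embedding f ->
  forall p q, ~~ neighbors (f p) (f q).

Lemma copy_setU1_twin (F : {set grid k l}) x z :
  z \in F -> neighbors x z -> twin F x z ->
  contains_strong_copy P (x |: F) -> contains_strong_copy P F.
Proof.
move=> zF nb_xz xz_twin /existsP[f /andP[f_emb /forallP f_in]].
have in_F u : u \in codom f -> u != x -> u \in F.
  by move=> /codomP[p ->] fpx; have := f_in p; rewrite in_setU1 (negbTE fpx).
have ne_z u : u \in codom f -> x \in codom f -> u != z.
  move=> /codomP[p ->] /codomP[q fq]; apply: contraTneq (copies_avoid_neighbors f_emb q p).
  by rewrite -fq => ->; rewrite nb_xz.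
pose r w := if w == x then z else w.
apply: (contains_copy_relabel f_emb (r := r)) => [u v | u v | p]; rewrite /r.
- case: (eqVneq u x) => [-> | ux] uf; case: (eqVneq v x) => [-> | vx] vf //.
    by move=> zv; move: (ne_z v vf uf); rewrite zv eqxx.
  by move=> uz; move: (ne_z u uf vf); rewrite uz eqxx.
- case: (eqVneq u x) => [-> | ux] uf; case: (eqVneq v x) => [-> | vx] vf.
  + by rewrite /grid_le !leqnn.
  + by case: (xz_twin v (in_F v vf vx) (ne_z v vf uf)).
  + by case: (xz_twin u (in_F u uf ux) (ne_z u uf vf)).
  + by [].
- by case: eqVneq => [_ | /(in_F _ (codom_f f p))].
Qed.

Lemma twin_not_saturated (F : {set grid k l}) x z :
  z \in F -> x \notin F -> neighbors x z -> twin F x z ->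
  ~~ strong_saturated P F.
Proof.
move=> zF xF nb_xz xz_twin; apply/negP => /andP[noF /forallP sat].
by rewrite (copy_setU1_twin zF nb_xz xz_twin (implyP (sat x) xF)) in noF.
Qed.

Lemma saturated_occupied_succ (F : {set grid k l}) j (j_lt : j.+1 < k) :
  strong_saturated P F -> occupied F j = occupied F j.+1.
Proof.
move=> satF; apply/idP/idP => [/exists_inP[w wF /eqP w1] | /exists_inP[w wF /eqP w1]];
  apply: contraT => free; suff: ~~ strong_saturated P F by rewrite satF.
- pose A := [pred u : grid k l | (u \in F) && (nat_of_ord u.1 == j)].
  have [|z /andP[zF /eqP z1] z_high] := @arg_maxnP _ w A (fun u => nat_of_ord u.2).
    by rewrite /= wF w1 eqxx.
  apply: (twin_not_saturated zF (x := (Ordinal j_lt, z.2))).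
  - by apply: contra free => xF; apply/exists_inP; exists (Ordinal j_lt, z.2).
  - by rewrite /neighbors /= eqxx z1 eqxx !orbT.
  - apply: twin_right_of_column => // u uF u1.
    by apply: z_high; rewrite /= uF u1 eqxx.
- pose A := [pred u : grid k l | (u \in F) && (nat_of_ord u.1 == j.+1)].
  have [|z /andP[zF /eqP z1] z_low] := @arg_minnP _ w A (fun u => nat_of_ord u.2).
    by rewrite /= wF w1 eqxx.
  have j_lt' : j < k by apply: ltnW.
  apply: (twin_not_saturated zF (x := (Ordinal j_lt', z.2))).
  - by apply: contra free => xF; apply/exists_inP; exists (Ordinal j_lt', z.2).
  - by rewrite /neighbors /= eqxx z1 eqxx !orbT.
  - apply: twin_left_of_column => // u uF u1.
    by apply: z_low; rewrite /= uF u1 eqxx.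
Qed.

Lemma saturated_all_occupied (F : {set grid k l}) :
  1 < #|P| -> 0 < l -> strong_saturated P F -> forall i : 'I_k, occupied F i.
Proof.
move=> P_gt1 l_gt0 satF i.
have [F0 | [y yF]] := set_0Vmem F.
  move: satF; rewrite F0 => /andP[_ /forallP/(_ (i, Ordinal l_gt0))].
  rewrite in_set0 setU0 => /card_le_of_copy; rewrite cards1.
  by rewrite leqNgt P_gt1.
have occ_0 c : c < k -> occupied F c = occupied F 0.
  by elim: c => // c IH c_lt; rewrite -saturated_occupied_succ // IH // ltnW.
by rewrite occ_0 // -(occ_0 y.1) //; apply/exists_inP; exists y.
Qed.

End Saturated.

End StrongCopies.

Theorem theorem1p10 (disp : Order.disp_t) (P : finPOrderType disp) :
  poset_dim_eq P 2 ->
  (forall (k l : nat) (f : P -> grid k l), strong_embedding f ->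
     forall p q : P, ~~ neighbors (f p) (f q)) ->
  forall k l : nat, 1 <= k -> 1 <= l -> maxn k l <= sat_star P k l.
Proof.
move=> dim2 avoid k l k_gt0 l_gt0.
have P_gt1 := card_gt1_of_dim dim2 (ltnSn 1).
rewrite /sat_star; elim/big_ind: _ => [| a b | F satF].
- by rewrite geq_max leq_pmulr // leq_pmull.
- by rewrite leq_min => ->.
have occ_cols := saturated_all_occupied (avoid k l) P_gt1 l_gt0 satF.
have occ_rows := saturated_all_occupied (avoid l k) P_gt1 k_gt0 (saturated_swap satF).
rewrite geq_max (card_ge_of_occupied occ_cols) /=.
by rewrite -(card_imset _ (can_inj (@swap_gridK k l))) (card_ge_of_occupied occ_rows).
Qed.
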